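(* For $n\ge1$ let $S_n$ be the set of binary sequences of length $n$ in which no maximal run of zeros has length congruent to $1\bmod 3$, and let $c_n=|S_n|$. Then $c_n=c_{n-1}+2c_{n-3}$ for $n\ge4$, with $c_1=1$, $c_2=2$, $c_3=4$.
   Context: A ''run of zeros'' means a maximal block of consecutive zeros; e.g. $00000\in S_5$ since its only run of zeros has length $5\equiv 2\pmod 3$. *)

From mathcomp Require Import all_boot.
Set Implicit Arguments. Unset Strict Implicit. Unset Printing Implicit Defensive.

(* Binary sequences of length n: n.-tuple bool, with false = 0 and true = 1. *)

Definition is_zero n (s : n.-tuple bool) (k : nat) : bool :=
  (k < n) && ~~ nth true s k.

Definition max_zero_run n (s : n.-tuple bool) (i l : nat) : bool :=
  [&& 0 < l, i + l <= n,
      all (fun k => is_zero s k) (iota i l),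
      (i == 0) || ~~ is_zero s i.-1 &
      ~~ is_zero s (i + l)].

Definition S_set n : {set n.-tuple bool} :=
  [set s : n.-tuple bool |
     [forall i : 'I_n.+1, forall l : 'I_n.+1,
        max_zero_run s i l ==> (l %% 3 != 1)]].

Definition c n : nat := #|S_set n|.

From mathcomp Require Import all_boot.

(* Sort the words of length n+3 by their first letters.  A word 1w lies in S
   iff w does, and 01w never does.  Prepending 001 to w creates a harmless run
   of length 2, and prepending 000 to w adds 3 to the leading run of zeros of w
   (or creates one of length 3), which does not change its length mod 3.  Hence
   c(n+3) = c(n+2) + c(n) + c(n). *)

Set Implicit Arguments.
Unset Strict Implicit.
Unset Printing Implicit Defensive.

Lemma big_tuple_cons R (idx : R) (op : Monoid.com_law idx) (T : finType) n
    (F : n.+1.-tuple T -> R) :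
  \big[op/idx]_(t : n.+1.-tuple T) F t =
  \big[op/idx]_(x : T) \big[op/idx]_(u : n.-tuple T) F [tuple of x :: u].
Proof.
rewrite pair_bigA (reindex (fun p : T * n.-tuple T => [tuple of p.1 :: p.2])) //.
exists (fun t => (thead t, [tuple of behead t])) => [[x u] _ | t _] /=.
  by congr pair; apply: val_inj.
by case/tupleP: t => x u; apply: val_inj.
Qed.

Definition count_words n (p : pred (seq bool)) : nat := \sum_(w : n.-tuple bool) p w.

Lemma count_words0 p : count_words 0 p = p [::].
Proof. by rewrite /count_words (big_pred1 [tuple]) // => w; apply/esym/eqP/tuple0. Qed.

Lemma count_wordsS n p :
  count_words n.+1 p = count_words n (p \o cons true) + count_words n (p \o cons false).
Proof. by rewrite /count_words big_tuple_cons big_bool. Qed.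

Lemma eq_count_words n p q : p =1 q -> count_words n p = count_words n q.
Proof. by move=> pq; apply: eq_bigr => w _; rewrite pq. Qed.

Lemma count_words_false n : count_words n (fun _ => false) = 0.
Proof. exact: big1. Qed.

(* Positions past the end read as [true], so a run ending the word is bounded by a one. *)
Definition zero_at (s : seq bool) (k : nat) : bool := ~~ nth true s k.

Definition zero_run (s : seq bool) (i l : nat) : bool :=
  [&& 0 < l, i + l <= size s, all (zero_at s) (iota i l),
      (i == 0) || ~~ zero_at s i.-1 & ~~ zero_at s (i + l)].

Lemma max_zero_runE n (t : n.-tuple bool) i l : max_zero_run t i l = zero_run t i l.
Proof.
have zeroE : is_zero t =1 zero_at t.
  move=> k; rewrite /is_zero /zero_at; case: ltnP => //= nk.
  by rewrite nth_default // size_tuple.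
by rewrite /max_zero_run /zero_run size_tuple (eq_all zeroE) !zeroE.
Qed.

Lemma all_zero_at_cons b s i l :
  all (zero_at (b :: s)) (iota i.+1 l) = all (zero_at s) (iota i l).
Proof. by elim: l i => //= l IHl i; rewrite IHl. Qed.

Lemma zero_runSS b s i l : zero_run (b :: s) i.+2 l = zero_run s i.+1 l.
Proof. by rewrite /zero_run all_zero_at_cons !addSn. Qed.

Lemma zero_run1 b s l : zero_run (b :: s) 1 l = b && zero_run s 0 l.
Proof.
rewrite /zero_run all_zero_at_cons /= add1n ltnS /zero_at /= negbK.
by case: b; rewrite ?andbF ?andbT.
Qed.

Lemma leading_zeros_find s l :
  all (zero_at s) (iota 0 l) && ~~ zero_at s l = (l == find id s).
Proof.
elim: s l => [|b s IHs] [|l] /=; rewrite /zero_at /= ?andbT //; first by case: b.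
by rewrite -/(zero_at (b :: s)) all_zero_at_cons -andbA IHs; case: b.
Qed.

Lemma zero_run0 s l : zero_run s 0 l = (0 < l) && (l == find id s).
Proof.
rewrite /zero_run add0n /=; case: (0 < l) => //=.
rewrite leading_zeros_find andbC; case: eqP => [->|]; rewrite ?andbF //.
by rewrite find_size.
Qed.

Lemma zero_run_nil i l : zero_run [::] i l = false.
Proof. by rewrite /zero_run; case: l => // l; rewrite addnS ltn0 andbF. Qed.

Section ZeroRuns.

Variable P : pred nat.

Definition has_run (s : seq bool) : Prop := exists i l, zero_run s i l && P l.

Definition has_inner_run (s : seq bool) : Prop := exists i l, zero_run s i.+1 l && P l.

Lemma has_inner_run_true s : has_inner_run (true :: s) <-> has_run s.
Proof.
split=> [[[|i] [l]] | [[|i] [l]]]; rewrite ?zero_run1 ?zero_runSS => run.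
- by exists 0, l.
- by exists i.+1, l.
- by exists 0, l; rewrite zero_run1.
- by exists i.+1, l; rewrite zero_runSS.
Qed.

Lemma has_inner_run_false s : has_inner_run (false :: s) <-> has_inner_run s.
Proof.
split=> [[[|i] [l]] | [i [l]]]; rewrite ?zero_run1 ?zero_runSS // => run.
- by exists i, l.
- by exists i.+1, l; rewrite zero_runSS.
Qed.

Hypothesis P0 : ~~ P 0.

Lemma has_run_split s : has_run s <-> has_inner_run s \/ P (find id s).
Proof.
split=> [[[|i] [l]] | [[i [l run]] | Pfind]].
- by rewrite zero_run0 => /andP [/andP [_ /eqP <-] Pl]; right.
- by move=> run; left; exists i, l.
- by exists i.+1, l.
exists 0, (find id s); rewrite zero_run0 eqxx Pfind !andbT lt0n.
by apply: contraTneq Pfind => ->.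
Qed.

Lemma has_run_true s : has_run (true :: s) <-> has_run s.
Proof.
split=> [/has_run_split [/has_inner_run_true // | /= /(negP P0) //] | run].
by apply/has_run_split; left; apply/has_inner_run_true.
Qed.

Lemma has_run_false s : has_run (false :: s) <-> has_inner_run s \/ P (find id s).+1.
Proof.
split=> [/has_run_split [/has_inner_run_false inner | Pfind] | [inner | Pfind]].
- by left.
- by right.
- by apply/has_run_split; left; apply/has_inner_run_false.
- by apply/has_run_split; right.
Qed.

End ZeroRuns.

Definition bad_length (l : nat) : bool := l %% 3 == 1.

Definition admissible (s : seq bool) : bool :=
  [forall i : 'I_(size s).+1, forall l : 'I_(size s).+1,
     zero_run s i l ==> ~~ bad_length l].

Lemma admissibleP s : reflect (~ has_run bad_length s) (admissible s).
Proof.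
apply: (iffP forallP) => [ok [i [l /andP [run bad]]] | no_bad i].
  have /and5P [_ size_il _ _ _] := run.
  have lt_i : i < (size s).+1 by rewrite ltnS (leq_trans (leq_addr l i)).
  have lt_l : l < (size s).+1 by rewrite ltnS (leq_trans (leq_addl i l)).
  by have /forallP/(_ (Ordinal lt_l)) := ok (Ordinal lt_i); rewrite /= run bad.
apply/forallP => l; apply/implyP => run; apply/negP => bad.
by apply: no_bad; exists i, l; rewrite run.
Qed.

Lemma mem_S_set n (t : n.-tuple bool) : (t \in S_set n) = admissible t.
Proof.
case: t => s sz; have size_s := eqP sz; subst n; rewrite inE.
by apply: eq_forallb => i; apply: eq_forallb => l; rewrite max_zero_runE.
Qed.

Fact bad_length0 : ~~ bad_length 0.
Proof. by []. Qed.

Lemma admissible_runs s s' :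
  (has_run bad_length s <-> has_run bad_length s') -> admissible s = admissible s'.
Proof.
by move=> same_runs; apply/admissibleP/admissibleP => no_run /same_runs.
Qed.

Lemma admissible_nil : admissible [::].
Proof. by apply/admissibleP => -[i [l]]; rewrite zero_run_nil. Qed.

Lemma admissible_true s : admissible (true :: s) = admissible s.
Proof. exact/admissible_runs/(has_run_true bad_length0). Qed.

Lemma admissible_false_true s : admissible [:: false, true & s] = false.
Proof. by apply/admissibleP; apply; apply/(has_run_false bad_length0); right. Qed.

Lemma admissible_false : admissible [:: false] = false.
Proof. by apply/admissibleP; apply; apply/(has_run_false bad_length0); right. Qed.

Lemma admissible_false_false : admissible [:: false; false].
Proof.
apply/admissibleP => /(has_run_false bad_length0) [/has_inner_run_false [i [l]] | //].
by rewrite zero_run_nil.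
Qed.

Lemma admissible_false_false_true s :
  admissible [:: false, false, true & s] = admissible s.
Proof.
apply: admissible_runs; split=> [/(has_run_false bad_length0) [|//] | run].
  by move/has_inner_run_false/has_inner_run_true.
by apply/(has_run_false bad_length0); left; apply/has_inner_run_false/has_inner_run_true.
Qed.

Lemma admissible_false_false_false s :
  admissible [:: false, false, false & s] = admissible s.
Proof.
have period k : bad_length k.+3 = bad_length k by rewrite /bad_length -addn3 modnDr.
have split_runs := has_run_split bad_length0.
have false_runs := has_run_false bad_length0.
apply: admissible_runs; split=> [/false_runs [inner | bad] | /split_runs [inner | bad]].
- by apply/split_runs; left; move: inner => /has_inner_run_false/has_inner_run_false.
- by apply/split_runs; right; rewrite -period.
- by apply/false_runs; left; apply/has_inner_run_false/has_inner_run_false.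
- by apply/false_runs; right; rewrite /= period.
Qed.

Lemma c_count_words n : c n = count_words n admissible.
Proof.
rewrite /c -sum1_card big_mkcond /=.
by apply: eq_bigr => t _; rewrite mem_S_set; case: admissible.
Qed.

Lemma c0 : c 0 = 1.
Proof. by rewrite c_count_words count_words0 admissible_nil. Qed.

Lemma c1 : c 1 = 1.
Proof.
rewrite c_count_words count_wordsS !count_words0 /=.
by rewrite admissible_true admissible_nil admissible_false.
Qed.

Lemma c2 : c 2 = 2.
Proof.
rewrite c_count_words !count_wordsS !count_words0 /= !admissible_true admissible_nil.
by rewrite admissible_false admissible_false_true admissible_false_false.
Qed.

Lemma c_rec n : c n.+3 = c n.+2 + 2 * c n.
Proof.
have starts_false :
    count_words n.+2 (admissible \o cons false) = 2 * count_words n admissible.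
  rewrite count_wordsS (eq_count_words _ admissible_false_true) count_words_false add0n.
  rewrite count_wordsS (eq_count_words _ admissible_false_false_true).
  by rewrite (eq_count_words _ admissible_false_false_false) addnn mul2n.
by rewrite !c_count_words count_wordsS (eq_count_words _ admissible_true) starts_false.
Qed.

Theorem theorem4 :
  (forall n : nat, 4 <= n -> c n = c n.-1 + 2 * c (n - 3)) /\
  c 1 = 1 /\ c 2 = 2 /\ c 3 = 4.
Proof.
split; last by rewrite c_rec c0 c1 c2.
by case=> [|[|[|[|n]]]] // _; rewrite c_rec !subSS subn0.
Qed.
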